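(* Let $(\Psi_d)_d$ be a constraint structure that is both a meet and a lift constraint structure, let $(\le,\wedge,P)$ be a decent triple on it, and let $(R^d)_d$ be a constraint-refining predicate that relates to a constraint-producing predicate $(\models^d)_d$. If $\vdash^{d}\Gamma\to\sigma'$ is derivable in DI, then for every $\sigma\in\Psi_d$ such that $P(\sigma\wedge\sigma')$ and for every sequentialisation $r$, there exists $\sigma''\in\Psi_d$ such that $\sigma''\simeq\sigma\wedge\sigma'$ and $\sigma\to\vdash^{d}\Gamma\to\sigma''$ is derivable in SDI with a proof tree that follows $r$.
   Context: Formulas are first-order formulas in negation normal form, built from literals using $\wedge,\vee,\forall,\exists$. Eigenvariables (written $\bar x$) and meta-variables (written $X$) are two disjoint infinite supplies of variables. Domains: there is an initial domain $d_0$; for a domain $d$ and an eigenvariable $\bar x$ (resp. meta-variable $X$) not declared in $d$, $d;\bar x$ (resp. $d;X$) is a domain declaring additionally $\bar x$ (resp. $X$); all domains arise this way. A formula of domain $d$ is one whose free variables are eigenvariables or meta-variables declared in $d$; a context of domain $d$ is a finite multiset of formulas of domain $d$; $\Gamma_{lit}$ is the set of literals that are elements of $\Gamma$. A constraint structure consists of a set $\Psi_d$ for each domain $d$, with $\Psi_{d;\bar x}=\Psi_d$, and projection maps $\Psi_{d;X}\to\Psi_d$, $\sigma\mapsto\sigma_\downarrow$; a meet constraint structure additionally has a binary operation $\wedge$ on each $\Psi_d$; a lift constraint structure additionally has maps $\Psi_d\to\Psi_{d;X}$, $\sigma\mapsto\sigma^\uparrow$. A triple $(\le,\wedge,P)$,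 where $\le$ is a family of preorders on the $\Psi_d$, $\wedge$ the meet operations, and $P$ a family of predicates on the $\Psi_d$, is decent if, writing $\simeq$ for the equivalence relation generated by $\le$: (D1) for all $\sigma,\sigma'\in\Psi_d$, $\sigma\wedge\sigma'$ is a greatest lower bound of $\sigma,\sigma'$ for $\le$; (D2) for all $\sigma\in\Psi_d$ and $\sigma',\sigma''\in\Psi_{d;X}$, $\sigma''\simeq\sigma^\uparrow\wedge\sigma'$ implies $\sigma''_\downarrow\simeq\sigma\wedge\sigma'_\downarrow$; (P1) for all $\sigma\in\Psi_{d;X}$, $P(\sigma)\iff P(\sigma_\downarrow)$; (P2) for all $\sigma,\sigma'\in\Psi_d$, $P(\sigma)$ and $\sigma\le\sigma'$ imply $P(\sigma')$. A constraint-producing predicate is a family of relations $\mathcal A\models^d\sigma$ between sets $\mathcal A$ of literals of domain $d$ and $\sigma\in\Psi_d$. A constraint-refining predicate is a family of relations $R^d(\sigma,\mathcal A,\sigma')$ between sets $\mathcal A$ of literals of domain $d$ and pairs $\sigma,\sigma'\in\Psi_d$. It relates to $(\models^d)_d$ if for all $d$, all sets $\mathcal A$ of literals of domain $d$ and all $\sigma\in\Psi_d$: (A1) for all $\sigma'\in\Psi_d$, $R^d(\sigma,\mathcal A,\sigma')$ implies there is $\sigma''\in\Psi_d$ with $\sigma'\simeq\sigma\wedge\sigma''$, $P(\sigma\wedge\sigma'')$ and $\mathcal A\models^d\sigma''$; (A2) for all $\sigma'\in\Psi_d$, if $P(\sigma\wedge\sigma')$ and $\mathcal A\models^d\sigma'$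 then there is $\sigma''\in\Psi_d$ with $\sigma''\simeq\sigma\wedge\sigma'$ and $R^d(\sigma,\mathcal A,\sigma'')$. System DI derives $\vdash^d\Gamma\to\sigma$ ($\Gamma$, $\sigma$ of domain $d$) by: $\vdash^d\Gamma\to\sigma$ if $\Gamma_{lit}\models^d\sigma$; from $\vdash^d\Gamma,A\to\sigma$ and $\vdash^d\Gamma,B\to\sigma'$ infer $\vdash^d\Gamma,A\wedge B\to\sigma\wedge\sigma'$; from $\vdash^d\Gamma,A,B\to\sigma$ infer $\vdash^d\Gamma,A\vee B\to\sigma$; from $\vdash^{d;X}\Gamma,A[x:=X],\exists xA\to\sigma$ ($X$ fresh meta-variable) infer $\vdash^d\Gamma,\exists xA\to\sigma_\downarrow$; from $\vdash^{d;\bar x}\Gamma,A[x:=\bar x]\to\sigma$ ($\bar x$ fresh eigenvariable) infer $\vdash^d\Gamma,\forall xA\to\sigma$. System SDI derives $\sigma\to\vdash^d\Gamma\to\sigma'$ ($\Gamma,\sigma,\sigma'$ of domain $d$) by: $\sigma\to\vdash^d\Gamma\to\sigma'$ if $R^d(\sigma,\Gamma_{lit},\sigma')$; from $\sigma\to\vdash^d\Gamma,A,B\to\sigma'$ infer $\sigma\to\vdash^d\Gamma,A\vee B\to\sigma'$; for $i\in\{0,1\}$, from $\sigma\to\vdash^d\Gamma,A_i\to\sigma''$ and $\sigma''\to\vdash^d\Gamma,A_{1-i}\to\sigma'$ infer $\sigma\to\vdash^d\Gamma,A_0\wedge A_1\to\sigma'$; from $\sigma^\uparrow\to\vdash^{d;X}\Gamma,A[x:=X],\exists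 xA\to\sigma'$ ($X$ fresh meta-variable) infer $\sigma\to\vdash^d\Gamma,\exists xA\to\sigma'_\downarrow$; from $\sigma\to\vdash^{d;\bar x}\Gamma,A[x:=\bar x]\to\sigma'$ ($\bar x$ fresh eigenvariable) infer $\sigma\to\vdash^d\Gamma,\forall xA\to\sigma'$. A sequentialisation is an infinite binary tree whose nodes are each labelled ''black'' or ''white''. An SDI proof tree $\pi$ follows a sequentialisation $r$, defined by induction on $\pi$: if the last rule has no premiss, $\pi$ follows $r$; if it has one premiss, $\pi$ follows $r$ iff its immediate subtree does; if the last rule is the $\wedge$ rule with index $i$, first premiss subtree $\pi_i$ (for $A_i$) and second premiss subtree $\pi_{1-i}$ (for $A_{1-i}$), then $\pi$ follows $r$ iff $\pi_i$ follows the left immediate subtree of $r$, $\pi_{1-i}$ follows the right immediate subtree of $r$, and either $i=0$ and the root of $r$ is white, or $i=1$ and the root of $r$ is black. *)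

From Stdlib Require Import List Permutation.
Import ListNotations.

Inductive decl : Type := DEig (n : nat) | DMeta (n : nat).

(* A domain is the list of its declarations, most recent first; the initial
   domain d0 is [] (declares nothing).  d;\bar x = DEig x :: d, d;X = DMeta X :: d. *)
Definition domain := list decl.

(* All domains arise from d0 by fresh extensions: no variable declared twice. *)
Definition dom_wf (d : domain) : Prop := NoDup d.

(* The constraint sets satisfy Psi_{d;\bar x} = Psi_d.  We realise this
   definitionally: a constraint family is indexed by domains, and Psi_d is
   the value at [key d], which strips the most recent eigenvariable declarations. *)
Fixpoint key (d : domain) : domain :=
  match d with
  | [] => []
  | DEig _ :: d' => key d'
  | DMeta X :: d' => DMeta X :: d'
  end.

Inductive term : Type :=
| TBound (n : nat)              (* bound variable, de Bruijn index *)
| TEig (n : nat)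
| TMeta (n : nat)
| TApp (f : nat) (ts : terms)
with terms : Type :=
| TNil
| TCons (t : term) (ts : terms).

Inductive lit : Type :=
| LPos (p : nat) (ts : terms)
| LNeg (p : nat) (ts : terms).

(* Formulas in negation normal form. *)
Inductive formula : Type :=
| FLit (l : lit)
| FAnd (A B : formula)
| FOr (A B : formula)
| FAll (A : formula)
| FEx (A : formula).

Fixpoint topen (k : nat) (u : term) (t : term) : term :=
  match t with
  | TBound n => if Nat.eqb n k then u else TBound n
  | TEig x => TEig x
  | TMeta X => TMeta X
  | TApp f ts => TApp f (tsopen k u ts)
  end
with tsopen (k : nat) (u : term) (ts : terms) : terms :=
  match ts with
  | TNil => TNil
  | TCons t ts' => TCons (topen k u t) (tsopen k u ts')
  end.

Definition lopen (k : nat) (u : term) (l : lit) : lit :=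
  match l with
  | LPos p ts => LPos p (tsopen k u ts)
  | LNeg p ts => LNeg p (tsopen k u ts)
  end.

Fixpoint fopen (k : nat) (u : term) (A : formula) : formula :=
  match A with
  | FLit l => FLit (lopen k u l)
  | FAnd A B => FAnd (fopen k u A) (fopen k u B)
  | FOr A B => FOr (fopen k u A) (fopen k u B)
  | FAll A => FAll (fopen (S k) u A)
  | FEx A => FEx (fopen (S k) u A)
  end.

Definition subst0 (A : formula) (t : term) : formula := fopen 0 t A.

Fixpoint term_of (d : domain) (k : nat) (t : term) : Prop :=
  match t with
  | TBound n => n < k
  | TEig x => In (DEig x) d
  | TMeta X => In (DMeta X) d
  | TApp _ ts => terms_of d k ts
  end
with terms_of (d : domain) (k : nat) (ts : terms) : Prop :=
  match ts with
  | TNil => True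
  | TCons t ts' => term_of d k t /\ terms_of d k ts'
  end.

Definition lit_of_at (d : domain) (k : nat) (l : lit) : Prop :=
  match l with
  | LPos _ ts => terms_of d k ts
  | LNeg _ ts => terms_of d k ts
  end.

Fixpoint formula_of_at (d : domain) (k : nat) (A : formula) : Prop :=
  match A with
  | FLit l => lit_of_at d k l
  | FAnd A B => formula_of_at d k A /\ formula_of_at d k B
  | FOr A B => formula_of_at d k A /\ formula_of_at d k B
  | FAll A => formula_of_at d (S k) A
  | FEx A => formula_of_at d (S k) A
  end.

Definition lit_of (d : domain) (l : lit) : Prop := lit_of_at d 0 l.
Definition formula_of (d : domain) (A : formula) : Prop := formula_of_at d 0 A.

(* contexts: finite multisets of formulas, represented by lists up to Permutation *)
Definition ctx_of (d : domain) (G : list formula) : Prop :=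
  forall A, In A G -> formula_of d A.

Definition lits (G : list formula) : lit -> Prop := fun l => In (FLit l) G.

Record cstruct : Type := {
  Psi : domain -> Type;
  proj : forall (d : domain) (X : nat), Psi (DMeta X :: d) -> Psi (key d);
  cmeet : forall (k : domain), Psi k -> Psi k -> Psi k;
  lift : forall (d : domain) (X : nat), Psi (key d) -> Psi (DMeta X :: d)
}.

Arguments proj c {d X} _.
Arguments cmeet c {k} _ _.
Arguments lift c {d X} _.

Section Constraints.
Variable C : cstruct.
Variable le : forall k : domain, Psi C k -> Psi C k -> Prop.
Variable P : forall k : domain, Psi C k -> Prop.

Definition ceq (k : domain) (a b : Psi C k) : Prop := le k a b /\ le k b a.

Definition preorder_family : Prop :=
  forall d, dom_wf d ->
    (forall a : Psi C (key d), le (key d) a a) /\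
    (forall a b c : Psi C (key d), le (key d) a b -> le (key d) b c -> le (key d) a c).

Definition is_glb (k : domain) (m a b : Psi C k) : Prop :=
  le k m a /\ le k m b /\ (forall c, le k c a -> le k c b -> le k c m).

Definition decent : Prop :=
  (* D1 *)
  (forall d, dom_wf d -> forall s s' : Psi C (key d),
      is_glb (key d) (cmeet C s s') s s') /\
  (* D2 *)
  (forall d X, dom_wf d -> ~ In (DMeta X) d ->
     forall (s : Psi C (key d)) (s' s'' : Psi C (DMeta X :: d)),
       ceq (DMeta X :: d) s'' (cmeet C (lift C s) s') ->
       ceq (key d) (proj C s'') (cmeet C s (proj C s'))) /\
  (* P1 *)
  (forall d X, dom_wf d -> ~ In (DMeta X) d ->
     forall s : Psi C (DMeta X :: d),
       P (DMeta X :: d) s <-> P (key d) (proj C s)) /\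
  (* P2 *)
  (forall d, dom_wf d -> forall s s' : Psi C (key d),
      P (key d) s -> le (key d) s s' -> P (key d) s').

Variable models : forall d : domain, (lit -> Prop) -> Psi C (key d) -> Prop.
Variable R : forall d : domain, Psi C (key d) -> (lit -> Prop) -> Psi C (key d) -> Prop.

Definition relates : Prop :=
  forall d, dom_wf d ->
  forall (A : lit -> Prop), (forall l, A l -> lit_of d l) ->
  forall s : Psi C (key d),
    (forall s', R d s A s' ->
       exists s'', ceq (key d) s' (cmeet C s s'') /\ P (key d) (cmeet C s s'')
                   /\ models d A s'') /\
    (forall s', P (key d) (cmeet C s s') -> models d A s' ->
       exists s'', ceq (key d) s'' (cmeet C s s') /\ R d s A s'').

Inductive DI : forall d : domain, list formula -> Psi C (key d) -> Prop :=
| DI_ax d G s :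
    dom_wf d -> ctx_of d G -> models d (lits G) s -> DI d G s
| DI_and d G G' A B s s' :
    ctx_of d G' -> Permutation G' (FAnd A B :: G) ->
    DI d (A :: G) s -> DI d (B :: G) s' -> DI d G' (cmeet C s s')
| DI_or d G G' A B s :
    ctx_of d G' -> Permutation G' (FOr A B :: G) ->
    DI d (A :: B :: G) s -> DI d G' s
| DI_ex d G G' A X s :
    ctx_of d G' -> ~ In (DMeta X) d -> Permutation G' (FEx A :: G) ->
    DI (DMeta X :: d) (subst0 A (TMeta X) :: FEx A :: G) s ->
    DI d G' (proj C s)
| DI_all d G G' A x (s : Psi C (key d)) :
    ctx_of d G' -> ~ In (DEig x) d -> Permutation G' (FAll A :: G) ->
    DI (DEig x :: d) (subst0 A (TEig x) :: G) s ->
    DI d G' s.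

Inductive SDI : forall d : domain, Psi C (key d) -> list formula -> Psi C (key d) -> Type :=
| SDI_ax d s G s' :
    dom_wf d -> ctx_of d G -> R d s (lits G) s' -> SDI d s G s'
| SDI_or d s G G' A B s' :
    ctx_of d G' -> Permutation G' (FOr A B :: G) ->
    SDI d s (A :: B :: G) s' -> SDI d s G' s'
| SDI_and d s G G' A0 A1 (i : bool) s'' s' :
    (* i = false : index 0, premises for A0 then A1; i = true : index 1, A1 then A0 *)
    ctx_of d G' -> Permutation G' (FAnd A0 A1 :: G) ->
    SDI d s ((if i then A1 else A0) :: G) s'' ->
    SDI d s'' ((if i then A0 else A1) :: G) s' ->
    SDI d s G' s'
| SDI_ex d s G G' A X s' :
    ctx_of d G' -> ~ In (DMeta X) d -> Permutation G' (FEx A :: G) ->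
    SDI (DMeta X :: d) (lift C s) (subst0 A (TMeta X) :: FEx A :: G) s' ->
    SDI d s G' (proj C s')
| SDI_all d (s : Psi C (key d)) G G' A x (s' : Psi C (key d)) :
    ctx_of d G' -> ~ In (DEig x) d -> Permutation G' (FAll A :: G) ->
    SDI (DEig x :: d) s (subst0 A (TEig x) :: G) s' ->
    SDI d s G' s'.

End Constraints.

Inductive color : Type := Black | White.

(* An infinite binary tree with coloured nodes: the colour of the node reached
   from the root by a path (false = go left, true = go right). *)
Definition seqz : Type := list bool -> color.
Definition seqz_root (r : seqz) : color := r [].
Definition seqz_left (r : seqz) : seqz := fun p => r (false :: p).
Definition seqz_right (r : seqz) : seqz := fun p => r (true :: p).

Fixpoint follows (C : cstruct)
  (R : forall d : domain, Psi C (key d) -> (lit -> Prop) -> Psi C (key d) -> Prop)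
  (d : domain) (s : Psi C (key d)) (G : list formula) (s' : Psi C (key d))
  (pi : SDI C R d s G s') (r : seqz) {struct pi} : Prop :=
  match pi with
  | SDI_ax _ _ _ _ _ _ _ _ _ => True
  | SDI_or _ _ _ _ _ _ _ _ _ _ _ p => follows C R _ _ _ _ p r
  | SDI_and _ _ _ _ _ _ _ _ i _ _ _ _ p1 p2 =>
      follows C R _ _ _ _ p1 (seqz_left r) /\ follows C R _ _ _ _ p2 (seqz_right r) /\
      ((i = false /\ seqz_root r = White) \/ (i = true /\ seqz_root r = Black))
  | SDI_ex _ _ _ _ _ _ _ _ _ _ _ _ p => follows C R _ _ _ _ p r
  | SDI_all _ _ _ _ _ _ _ _ _ _ _ _ p => follows C R _ _ _ _ p r
  end.

Arguments follows {C R d s G s'} pi r.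

(* Induction on the DI derivation, threading the accumulated constraint
   through the SDI derivation.  At a conjunction the premiss chosen by the
   colour of the root of r is refined first; its output t1 ~ s /\ s1 is fed to
   the other premiss, whose output is then ~ (s /\ s1) /\ s2 ~ s /\ (s1 /\ s2)
   because meets are glbs, hence associative and commutative up to ~.
   Admissibility of the intermediate constraints follows from P2, and
   existential steps are handled by D2 and P1. *)

From Stdlib Require Import List Permutation.

Section MeetPreorder.

Variables (T : Type) (le : T -> T -> Prop) (meet : T -> T -> T).
Hypothesis le_trans : forall a b c, le a b -> le b c -> le a c.
Hypothesis meet_glb : forall a b,
  le (meet a b) a /\ le (meet a b) b /\ (forall c, le c a -> le c b -> le c (meet a b)).

Local Notation equiv a b := (le a b /\ le b a).

Lemma meet_le_l a b : le (meet a b) a.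
Proof. apply meet_glb. Qed.

Lemma meet_le_r a b : le (meet a b) b.
Proof. apply meet_glb. Qed.

Lemma le_meet a b c : le c a -> le c b -> le c (meet a b).
Proof. apply meet_glb. Qed.

Lemma equiv_trans a b c : equiv a b -> equiv b c -> equiv a c.
Proof. intros [Hab Hba] [Hbc Hcb]; split; eauto. Qed.

Lemma meet_mono_r a b b' : le b b' -> le (meet a b) (meet a b').
Proof.
  intros Hb; apply le_meet; [apply meet_le_l |].
  eapply le_trans; [apply meet_le_r | exact Hb].
Qed.

Lemma meet_mono_l a a' b : le a a' -> le (meet a b) (meet a' b).
Proof.
  intros Ha; apply le_meet; [| apply meet_le_r].
  eapply le_trans; [apply meet_le_l | exact Ha].
Qed.

Lemma meet_equiv_l a a' b : equiv a a' -> equiv (meet a b) (meet a' b).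
Proof. intros [Ha Ha']; split; apply meet_mono_l; assumption. Qed.

Lemma meet_equiv_r a b b' : equiv b b' -> equiv (meet a b) (meet a b').
Proof. intros [Hb Hb']; split; apply meet_mono_r; assumption. Qed.

Lemma meetC_equiv a b : equiv (meet a b) (meet b a).
Proof. split; apply le_meet; auto using meet_le_l, meet_le_r. Qed.

Lemma meetA_equiv a b c : equiv (meet (meet a b) c) (meet a (meet b c)).
Proof.
  split.
  - apply le_meet; [| apply meet_mono_l, meet_le_r].
    eapply le_trans; apply meet_le_l.
  - apply le_meet; [apply meet_mono_r, meet_le_l |].
    eapply le_trans; apply meet_le_r.
Qed.

End MeetPreorder.

Lemma dom_wf_cons (v : decl) (d : domain) : dom_wf (v :: d) -> dom_wf d.
Proof. intros Hwf; exact (proj2 (proj1 (NoDup_cons_iff v d) Hwf)). Qed.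

Lemma DI_dom_wf C models d G s : DI C models d G s -> dom_wf d.
Proof. induction 1; eauto using dom_wf_cons. Qed.

Section Sequentialisation.

Variables (C : cstruct)
  (le : forall k : domain, Psi C k -> Psi C k -> Prop)
  (P : forall k : domain, Psi C k -> Prop)
  (models : forall d : domain, (lit -> Prop) -> Psi C (key d) -> Prop)
  (R : forall d : domain, Psi C (key d) -> (lit -> Prop) -> Psi C (key d) -> Prop).
Hypothesis le_preorder : preorder_family C le.
Hypothesis le_meet_P_decent : decent C le P.
Hypothesis R_relates : relates C le P models R.

Definition sequentialisable (d : domain) (G : list formula) (s' : Psi C (key d)) : Prop :=
  forall s : Psi C (key d), P (key d) (cmeet C s s') ->
  forall r : seqz, exists (s'' : Psi C (key d)) (pi : SDI C R d s G s''),
    ceq C le (key d) s'' (cmeet C s s') /\ follows pi r.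

Lemma P_le d (s s' : Psi C (key d)) :
  dom_wf d -> P (key d) s -> le (key d) s s' -> P (key d) s'.
Proof. destruct le_meet_P_decent as (_ & _ & _ & HP2); eauto. Qed.

Lemma sequentialisable_ax d G s' :
  dom_wf d -> ctx_of d G -> models d (lits G) s' -> sequentialisable d G s'.
Proof.
  intros Hwf Hctx Hmodels s HP r.
  assert (Hlits : forall l, lits G l -> lit_of d l) by (intros l Hl; exact (Hctx _ Hl)).
  destruct (proj2 (R_relates d Hwf (lits G) Hlits s) s' HP Hmodels) as (t & Ht & HR).
  exists t, (SDI_ax C R d s G t Hwf Hctx HR); split; [exact Ht | exact I].
Qed.

Lemma sequentialisable_and_index d G G' A0 A1 (i : bool) sa sb :
  dom_wf d -> ctx_of d G' -> Permutation G' (FAnd A0 A1 :: G) ->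
  sequentialisable d ((if i then A1 else A0) :: G) sa ->
  sequentialisable d ((if i then A0 else A1) :: G) sb ->
  forall s, P (key d) (cmeet C s (cmeet C sa sb)) ->
  forall r, (i = false /\ seqz_root r = White) \/ (i = true /\ seqz_root r = Black) ->
  exists s'' (pi : SDI C R d s G' s''),
    ceq C le (key d) s'' (cmeet C s (cmeet C sa sb)) /\ follows pi r.
Proof.
  intros Hwf Hctx Hperm Hseqa Hseqb s HP r Hi.
  destruct (le_preorder d Hwf) as [_ Htrans].
  pose proof (proj1 le_meet_P_decent d Hwf) as Hglb.
  assert (HPa : P (key d) (cmeet C s sa)).
  { apply (P_le d _ _ Hwf HP), (meet_mono_r _ _ _ Htrans Hglb), (meet_le_l _ _ _ Hglb). }
  destruct (Hseqa s HPa (seqz_left r)) as (t1 & pi1 & Ht1 & Hfollows1).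
  assert (Ht1b : ceq C le (key d) (cmeet C t1 sb) (cmeet C s (cmeet C sa sb))).
  { eapply equiv_trans; [exact Htrans | apply (meet_equiv_l _ _ _ Htrans Hglb), Ht1 |].
    apply (meetA_equiv _ _ _ Htrans Hglb). }
  assert (HPb : P (key d) (cmeet C t1 sb)) by exact (P_le d _ _ Hwf HP (proj2 Ht1b)).
  destruct (Hseqb t1 HPb (seqz_right r)) as (t2 & pi2 & Ht2 & Hfollows2).
  exists t2, (SDI_and C R d s G G' A0 A1 i t1 t2 Hctx Hperm pi1 pi2).
  split; [exact (equiv_trans _ _ Htrans _ _ _ Ht2 Ht1b) |].
  simpl; auto.
Qed.

Lemma sequentialisable_and d G G' A B s1 s2 :
  dom_wf d -> ctx_of d G' -> Permutation G' (FAnd A B :: G) ->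
  sequentialisable d (A :: G) s1 -> sequentialisable d (B :: G) s2 ->
  sequentialisable d G' (cmeet C s1 s2).
Proof.
  intros Hwf Hctx Hperm HseqA HseqB s HP r.
  destruct (seqz_root r) eqn:Hroot.
  - destruct (le_preorder d Hwf) as [_ Htrans].
    pose proof (proj1 le_meet_P_decent d Hwf) as Hglb.
    (* the black root refines B first, computing s /\ (s2 /\ s1) *)
    assert (Hswap : ceq C le (key d) (cmeet C s (cmeet C s2 s1)) (cmeet C s (cmeet C s1 s2))).
    { apply (meet_equiv_r _ _ _ Htrans Hglb), (meetC_equiv _ _ _ Hglb). }
    destruct (sequentialisable_and_index d G G' A B true s2 s1 Hwf Hctx Hperm HseqB HseqA s
                (P_le d _ _ Hwf HP (proj2 Hswap)) r (or_intror (conj eq_refl Hroot)))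
      as (t & pi & Ht & Hfollows).
    exists t, pi; split; [exact (equiv_trans _ _ Htrans _ _ _ Ht Hswap) | exact Hfollows].
  - exact (sequentialisable_and_index d G G' A B false s1 s2 Hwf Hctx Hperm HseqA HseqB s HP r
             (or_introl (conj eq_refl Hroot))).
Qed.

Lemma sequentialisable_or d G G' A B s' :
  ctx_of d G' -> Permutation G' (FOr A B :: G) ->
  sequentialisable d (A :: B :: G) s' -> sequentialisable d G' s'.
Proof.
  intros Hctx Hperm Hseq s HP r.
  destruct (Hseq s HP r) as (t & pi & Ht & Hfollows).
  exists t, (SDI_or C R d s G G' A B t Hctx Hperm pi); split; assumption.
Qed.

Lemma sequentialisable_ex d G G' A X s' :
  dom_wf (DMeta X :: d) -> ctx_of d G' -> ~ In (DMeta X) d -> Permutation G' (FEx A :: G) ->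
  sequentialisable (DMeta X :: d) (subst0 A (TMeta X) :: FEx A :: G) s' ->
  sequentialisable d G' (proj C s').
Proof.
  intros HwfX Hctx Hfresh Hperm Hseq s HP r.
  destruct le_meet_P_decent as (_ & HD2 & HP1 & _).
  pose proof (dom_wf_cons _ _ HwfX) as Hwf.
  destruct (le_preorder _ HwfX) as [HreflX _].
  assert (Hproj := HD2 d X Hwf Hfresh s s' (cmeet C (lift C s) s') (conj (HreflX _) (HreflX _))).
  assert (HPX : P (DMeta X :: d) (cmeet C (lift C s) s')).
  { apply (HP1 d X Hwf Hfresh), (P_le d _ _ Hwf HP), Hproj. }
  destruct (Hseq (lift C s) HPX r) as (t & pi & Ht & Hfollows).
  exists (proj C t), (SDI_ex C R d s G G' A X t Hctx Hfresh Hperm pi).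
  split; [exact (HD2 d X Hwf Hfresh s s' t Ht) | exact Hfollows].
Qed.

Lemma sequentialisable_all d G G' A x s' :
  ctx_of d G' -> ~ In (DEig x) d -> Permutation G' (FAll A :: G) ->
  sequentialisable (DEig x :: d) (subst0 A (TEig x) :: G) s' ->
  sequentialisable d G' s'.
Proof.
  intros Hctx Hfresh Hperm Hseq s HP r.
  destruct (Hseq s HP r) as (t & pi & Ht & Hfollows).
  exists t, (SDI_all C R d s G G' A x t Hctx Hfresh Hperm pi); split; assumption.
Qed.

End Sequentialisation.

Theorem mainTheorem7 (C : cstruct)
  (le : forall k : domain, Psi C k -> Psi C k -> Prop)
  (P : forall k : domain, Psi C k -> Prop)
  (models : forall d : domain, (lit -> Prop) -> Psi C (key d) -> Prop)
  (R : forall d : domain, Psi C (key d) -> (lit -> Prop) -> Psi C (key d) -> Prop) :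
  preorder_family C le ->
  decent C le P ->
  relates C le P models R ->
  forall (d : domain) (G : list formula) (s' : Psi C (key d)),
    DI C models d G s' ->
    forall (s : Psi C (key d)),
      P (key d) (cmeet C s s') ->
      forall r : seqz,
        exists (s'' : Psi C (key d)) (pi : SDI C R d s G s''),
          ceq C le (key d) s'' (cmeet C s s') /\ follows pi r.
Proof.
  intros Hpre Hdecent Hrel d G s' HDI.
  change (sequentialisable C le P R d G s').
  induction HDI.
  - eapply sequentialisable_ax; eassumption.
  - eapply sequentialisable_and; eauto using DI_dom_wf.
  - eapply sequentialisable_or; eassumption.
  - eapply sequentialisable_ex; eauto using DI_dom_wf.
  - eapply sequentialisable_all; eassumption.
Qed.
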